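(* Let $\mathbf{A}$ be a finite nilpotent algebra with a Mal'cev term, let $0\in A$, and let $\cdot$ and $\backslash$ be the loop multiplication and left division associated with $0$ (see context). Let $f(x_1,\ldots,x_m)\in\operatorname{Pol}_m(\mathbf{A})$, let $a_1,\ldots,a_N$ be an enumeration of the elements of $A$, and let $\bar b\in A^m$. Define $r_0(x_1,\ldots,x_m)=f(0,\ldots,0)$ (a constant), and recursively for $0\le k<m$: $$t_S(\bar x_{\restriction S})=\Big(\prod_{i=0}^{k} r_i(\bar x_S)\Big)\backslash f(\bar x_S)\quad\text{for } S\in\tbinom{[m]}{k+1},$$ $$r_{k+1}(x_1,\ldots,x_m)=\prod_{i=1}^{N}\ \prod_{\substack{S\in\binom{[m]}{k+1}\\ t_S(\bar b_{\restriction S})=a_i}} t_S(\bar x_{\restriction S}),$$ where the inner product is taken in an arbitrary fixed order of the sets $S$ (and $t_\emptyset:=0$). Then: (1) for every $S\subseteq[m]$, the $|S|$-ary polynomial $t_S$ is $0$-absorbing; (2) for every $S\subseteq[m]$ with $|S|=k$, $f(\bar x_S)=\prod_{i=0}^{k} r_i(\bar x_S)$ for all values of the variables; in particular $f(x_1,\ldots,x_m)=\prod_{i=0}^{m} r_i(x_1,\ldots,x_m)$ for all $x_1,\ldots,x_m\in A$; (3) if $n$ is a positive integer such that for every $k\ge n$ every $0$-absorbing $k$-ary polynomial of $\mathbf{A}$ is the constant function $0$ (which holds when $\mathbf{A}$ is supernilpotent of the appropriate degree $n$), then $r_k$ is the constant function $0$ for every $k\ge n$.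
   Context: A polynomial of an algebra $\mathbf{A}$ is a term built from variables and constants from $A$ using the basic operations of $\mathbf{A}$; $\operatorname{Pol}_m(\mathbf{A})$ denotes the $m$-ary polynomial operations. A Mal'cev term $m$ satisfies $m(y,x,x)=m(x,x,y)=y$. Nilpotency refers to the term-condition (commutator-theoretic) notion. It is a known fact that for a nilpotent algebra with Mal'cev term $m$ and any $0\in A$, $x\cdot y:=m(x,0,y)$ is a loop multiplication with neutral element $0$ (every equation $x\cdot z=y$ and $z\cdot x=y$ has a unique solution $z$), and the left division $x\backslash y$ (the unique $z$ with $x\cdot z=y$) and right division $y/x$ (the unique $z$ with $z\cdot x=y$) are polynomial operations of $\mathbf{A}$. $\prod_{i=1}^n x_i$ denotes the left-associated product $(\cdots((x_1\cdot x_2)\cdot x_3)\cdots)\cdot x_n$. $[m]=\{1,\ldots,m\}$, $\binom{[m]}{k}=\{S\subseteq[m]:|S|=k\}$. For $\bar x=(x_1,\ldots,x_m)$ and $S\subseteq[m]$, $\bar x_S$ is the $m$-tuple whose $i$-th entry is $x_i$ if $i\in S$ and $0$ otherwise, and $\bar x_{\restriction S}$ is the $|S|$-tuple $(x_i)_{i\in S}$. A polynomial $g(x_1,\ldots,x_k)$ is $0$-absorbing if $g(y_1,\ldots,y_k)=0$ whenever $y_i=0$ for some $i$. *)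

From HB Require Import structures.
From mathcomp Require Import all_boot.
Set Implicit Arguments. Unset Strict Implicit. Unset Printing Implicit Defensive.

Record algebra := Algebra {
  carrier :> finType;
  sym : Type;
  arity : sym -> nat;
  op : forall s : sym, ('I_(arity s) -> carrier) -> carrier }.

Section Clones.
Variable A : algebra.

Inductive Clo (n : nat) : (('I_n -> A) -> A) -> Prop :=
| clo_proj (j : 'I_n) : Clo (fun x => x j)
| clo_op (s : sym A) (g : 'I_(arity s) -> (('I_n -> A) -> A)) :
    (forall j, Clo (g j)) -> Clo (fun x => @op A s (fun j => g j x)).

Inductive Pol (n : nat) : (('I_n -> A) -> A) -> Prop :=
| pol_proj (j : 'I_n) : Pol (fun x => x j)
| pol_const (c : A) : Pol (fun _ => c)
| pol_op (s : sym A) (g : 'I_(arity s) -> (('I_n -> A) -> A)) :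
    (forall j, Pol (g j)) -> Pol (fun x => @op A s (fun j => g j x)).

Definition is_cong (th : A -> A -> Prop) : Prop :=
  [/\ (forall x, th x x), (forall x y, th x y -> th y x),
      (forall x y z, th x y -> th y z -> th x z) &
      (forall (s : sym A) (x y : 'I_(arity s) -> A),
          (forall j, th (x j) (y j)) -> th (@op A s x) (@op A s y))].

Definition catf p q (a : 'I_p -> A) (c : 'I_q -> A) : 'I_(p + q) -> A :=
  fun i => match split i with inl j => a j | inr j => c j end.

Definition centralizes (al be de : A -> A -> Prop) : Prop :=
  forall p q (t : ('I_(p + q) -> A) -> A), Clo t ->
  forall (a b : 'I_p -> A) (c d : 'I_q -> A),
    (forall i, al (a i) (b i)) -> (forall j, be (c j) (d j)) ->
    de (t (catf a c)) (t (catf a d)) -> de (t (catf b c)) (t (catf b d)).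

Definition commutator (al be : A -> A -> Prop) : A -> A -> Prop :=
  fun x y => forall de, is_cong de -> centralizes al be de -> de x y.

Definition full_rel : A -> A -> Prop := fun _ _ => True.

Fixpoint lcs (k : nat) : A -> A -> Prop :=
  match k with 0 => full_rel | k'.+1 => commutator full_rel (lcs k') end.

Definition nilpotent : Prop := exists k, forall x y, lcs k x y -> x = y.

Definition tup3 (x y z : A) : 'I_3 -> A := fun i => nth x [:: x; y; z] i.

Definition is_malcev (mt : ('I_3 -> A) -> A) : Prop :=
  [/\ Clo mt, (forall x y, mt (tup3 y x x) = y) & (forall x y, mt (tup3 x x y) = y)].

Definition lmul (mt : ('I_3 -> A) -> A) (zero : A) (x y : A) : A := mt (tup3 x zero y).

Definition zero_absorbing (zero : A) k (g : ('I_k -> A) -> A) : Prop :=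
  forall y : 'I_k -> A, (exists i, y i = zero) -> g y = zero.

Definition pair2 (x y : A) : 'I_2 -> A := fun i => nth x [:: x; y] i.
End Clones.

Section Construction.
Variables (A : finType) (zero : A) (mul ldiv : A -> A -> A) (m : nat)
  (f : ('I_m -> A) -> A) (s : seq A) (ord : seq {set 'I_m}) (b : 'I_m -> A).

Definition lprod (l : seq A) : A := if l is x :: l' then foldl mul x l' else zero.

Definition restr (S : {set 'I_m}) (x : 'I_m -> A) : 'I_m -> A :=
  fun i => if i \in S then x i else zero.

Definition tfrom (rs : seq (('I_m -> A) -> A)) (S : {set 'I_m}) (x : 'I_m -> A) : A :=
  ldiv (lprod [seq g (restr S x) | g <- rs]) (f (restr S x)).

Definition rnext (rs : seq (('I_m -> A) -> A)) (k : nat) : ('I_m -> A) -> A :=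
  fun x => lprod [seq lprod [seq tfrom rs X x |
                   X <- [seq X : {set 'I_m} <- ord | (#|X| == k.+1) && (tfrom rs X b == a)]]
                 | a : A <- s].

Fixpoint rseq (k : nat) : seq (('I_m -> A) -> A) :=
  match k with
  | 0 => [:: fun _ => f (fun _ => zero)]
  | k'.+1 => rcons (rseq k') (rnext (rseq k') k')
  end.

Definition rfun (k : nat) : ('I_m -> A) -> A := nth (fun _ => zero) (rseq k) k.

(* t_S (as an m-ary function depending only on the coordinates in S); t_empty = 0 *)
Definition tfun (S : {set 'I_m}) : ('I_m -> A) -> A :=
  if S == set0 then (fun _ => zero) else tfrom (rseq (#|S|.-1)) S.
End Construction.

From mathcomp Require Import all_boot.
From Stdlib Require Import FunctionalExtensionality.
Set Implicit Arguments. Unset Strict Implicit. Unset Printing Implicit Defensive.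

(* If f(x_S) = (r_0 ... r_k)(x_S) whenever |S| = k, then for
   |T| = k+1 and x_i = 0 with i in T we have x_T = x_{T\{i}}, so t_T(x) is the
   left quotient of a product by itself, i.e. 0.  Hence, evaluated at x_S with
   |S| = k+1, every t_X with |X| = k+1 and X <> S vanishes (X contains a
   coordinate outside S), so the product defining r_{k+1}(x_S) collapses to
   t_S(x_S) and f(x_S) = (r_0 ... r_k)(x_S) . t_S(x_S) = (r_0 ... r_{k+1})(x_S).
   For (3): t_S is a 0-absorbing polynomial in the |S| variables of S, hence 0
   when |S| >= n, and r_k is then a product of zeros. *)

Section PolynomialClosure.
Variable A : algebra.

Lemma Clo_Pol n (g : ('I_n -> A) -> A) : Clo g -> Pol g.
Proof. by elim=> [j|s g0 _ IHg]; [exact: pol_proj | exact: pol_op]. Qed.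

Lemma Pol_comp n k (h : ('I_n -> A) -> A) (G : ('I_k -> A) -> 'I_n -> A) :
  Pol h -> (forall j, Pol (fun y => G y j)) -> Pol (fun y => h (G y)).
Proof.
move=> Ph PG; elim: Ph => [j|c|s g0 _ IHg]; [exact: PG | exact: pol_const |].
exact: (@pol_op A k s (fun j y => g0 j (G y))).
Qed.

Lemma Pol_binop (op : A -> A -> A) n (g h : ('I_n -> A) -> A) :
  Pol (fun v : 'I_2 -> A => op (v ord0) (v ord_max)) -> Pol g -> Pol h ->
  Pol (fun x => op (g x) (h x)).
Proof.
move=> Pop Pg Ph; apply: (Pol_comp (G := fun x => pair2 (g x) (h x)) Pop).
by case=> [[|[|j]] ?].
Qed.

Lemma Pol_lprod (zero : A) (op : A -> A -> A) n (I : Type) (l : seq I)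
    (F : I -> ('I_n -> A) -> A) :
  Pol (fun v : 'I_2 -> A => op (v ord0) (v ord_max)) -> (forall i, Pol (F i)) ->
  Pol (fun x => lprod zero op [seq F i x | i <- l]).
Proof.
move=> Pop PF; case: l => [|i l] /=; first exact: pol_const.
elim: l (F i) (PF i) => //= j l IHl g Pg.
exact: (IHl (fun x => op (g x) (F j x)) (Pol_binop Pop Pg (PF j))).
Qed.

Lemma Pol_restr (zero : A) m (S : {set 'I_m}) (h : ('I_m -> A) -> A) :
  Pol h -> Pol (fun x => h (restr zero S x)).
Proof.
move=> Ph; apply: (Pol_comp (G := restr zero S)) => // i.
by rewrite /restr; case: (i \in S); [exact: pol_proj | exact: pol_const].
Qed.

Lemma Pol_lmul (mt : ('I_3 -> A) -> A) (zero : A) : is_malcev mt ->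
  Pol (fun v : 'I_2 -> A => lmul mt zero (v ord0) (v ord_max)).
Proof.
case=> Clo_mt _ _.
apply: (Pol_comp (G := fun v => tup3 (v ord0) zero (v ord_max)) (Clo_Pol Clo_mt)).
by case=> [[|[|[|j]]] ?] /=; [exact: pol_proj | exact: pol_const | exact: pol_proj |].
Qed.

(* [spread X y] places y : A^|X| on the coordinates in X, and 0 elsewhere. *)
Definition spread (zero : A) m (X : {set 'I_m}) (y : 'I_#|X| -> A) (i : 'I_m) : A :=
  if [pick j : 'I_#|X| | enum_val j == i] is Some j then y j else zero.

Lemma Pol_absorbing_on_eq0 (zero : A) m (X : {set 'I_m}) (g : ('I_m -> A) -> A) :
  (forall h : ('I_#|X| -> A) -> A, Pol h -> zero_absorbing zero h -> forall y, h y = zero) ->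
  Pol g -> (forall x, g (restr zero X x) = g x) ->
  (forall x i, i \in X -> x i = zero -> g x = zero) ->
  forall x, g x = zero.
Proof.
move=> absorbing_eq0 Pg g_restr g_absorbing x.
have Pg_spread : Pol (fun y : 'I_#|X| -> A => g (spread zero y)).
  apply: (Pol_comp (G := @spread zero m X) Pg) => i; rewrite /spread.
  by case: pickP => [j _|_]; [exact: pol_proj | exact: pol_const].
have g_spread_absorbing : zero_absorbing zero (fun y : 'I_#|X| -> A => g (spread zero y)).
  move=> y [j yj]; apply: (g_absorbing _ (enum_val j)); first exact: enum_valP.
  rewrite /spread; case: pickP => [j' /eqP/enum_val_inj -> //|].
  by move/(_ j); rewrite eqxx.
have restr_spread : restr zero X x = restr zero X (@spread zero m X (x \o enum_val)).
  apply: functional_extensionality => i; rewrite /restr /spread.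
  case: ifP => // iX; case: pickP => [j /eqP /= -> //|].
  by move/(_ (enum_rank_in iX i)); rewrite enum_rankK_in ?eqxx.
by rewrite -g_restr restr_spread g_restr (absorbing_eq0 _ Pg_spread g_spread_absorbing).
Qed.

End PolynomialClosure.

Section LeftProducts.
Variables (T : finType) (zero : T) (mul : T -> T -> T).
Hypotheses (mul0x : left_id zero mul) (mulx0 : right_id zero mul).
Local Notation lp := (lprod zero mul).

Lemma lprod_foldl l : lp l = foldl mul zero l.
Proof. by case: l => //= x l; rewrite mul0x. Qed.

Lemma lprod_rcons l x : lp (rcons l x) = mul (lp l) x.
Proof. by rewrite !lprod_foldl foldl_rcons. Qed.

Lemma lprod_map_eq0 (I : eqType) (l : seq I) (F : I -> T) :
  (forall i, i \in l -> F i = zero) -> lp [seq F i | i <- l] = zero.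
Proof.
rewrite lprod_foldl; elim: l => //= i l IHl F0.
by rewrite F0 ?mem_head // mulx0 IHl // => j jl; rewrite F0 // mem_behead.
Qed.

Lemma lprod_map_single (I : eqType) (l : seq I) (F : I -> T) i0 : uniq l ->
  (forall i, i \in l -> i != i0 -> F i = zero) ->
  lp [seq F i | i <- l] = if i0 \in l then F i0 else zero.
Proof.
move=> l_uniq F0; rewrite lprod_foldl.
suff -> : forall acc, foldl mul acc [seq F i | i <- l] =
                      if i0 \in l then mul acc (F i0) else acc.
  by case: ifP; rewrite ?mul0x.
elim: l l_uniq F0 => //= i l IHl /andP[il l_uniq] F0 acc.
have {}IHl := IHl l_uniq (fun j jl => F0 j (mem_behead (s := i :: l) jl)).
rewrite in_cons; case: (eqVneq i0 i) => [i0_eq|i0i] /=.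
  by rewrite i0_eq IHl i0_eq (negbTE il).
by rewrite F0 ?mem_head 1?eq_sym // mulx0 IHl.
Qed.

End LeftProducts.

Section Decomposition.
Variables (A : algebra) (zero : A) (mul ldiv : A -> A -> A).
Hypotheses (mul0x : left_id zero mul) (mulx0 : right_id zero mul)
  (mulKdiv : forall x, cancel (ldiv x) (mul x))
  (divKmul : forall x, cancel (mul x) (ldiv x)).
Variables (m : nat) (f : ('I_m -> A) -> A) (s : seq A) (ord : seq {set 'I_m})
  (b : 'I_m -> A).
Hypotheses (s_uniq : uniq s) (s_full : forall a, a \in s)
  (ord_uniq : uniq ord) (ord_full : forall S, S \in ord).

Local Notation lp := (lprod zero mul).
Local Notation R := (rseq zero mul ldiv f s ord b).
Local Notation r := (rfun zero mul ldiv f s ord b).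
Local Notation tS := (tfrom zero mul ldiv f).
Local Notation restr := (restr zero).

Definition rprod k (x : 'I_m -> A) : A := lp [seq r i x | i <- iota 0 k.+1].

Lemma rseq_rfun k : R k = [seq r i | i <- iota 0 k.+1].
Proof.
elim: k => // k IHk.
rewrite -[k.+2]addn1 iotaD cats1 map_rcons -IHk /=.
by congr rcons; rewrite /rfun /= nth_rcons IHk size_map size_iota ltnn eqxx.
Qed.

Lemma rfunS k : r k.+1 = rnext zero mul ldiv f s ord b (R k) k.
Proof. by rewrite /rfun /= nth_rcons rseq_rfun size_map size_iota ltnn eqxx. Qed.

Lemma rprodS k (x : 'I_m -> A) : rprod k.+1 x = mul (rprod k x) (r k.+1 x).
Proof. by rewrite /rprod -[k.+2]addn1 iotaD cats1 map_rcons lprod_rcons. Qed.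

Lemma tfrom_rseq k (S : {set 'I_m}) (x : 'I_m -> A) :
  tS (R k) S x = ldiv (rprod k (restr S x)) (f (restr S x)).
Proof. by rewrite /tfrom rseq_rfun -map_comp. Qed.

Lemma restr_idem (S : {set 'I_m}) (x : 'I_m -> A) : restr S (restr S x) = restr S x.
Proof. by apply: functional_extensionality => i; rewrite /restr; case: (i \in S). Qed.

Lemma tfrom_absorbing_of_decomp k :
  (forall S : {set 'I_m}, #|S| = k -> forall x, f (restr S x) = rprod k (restr S x)) ->
  forall T : {set 'I_m}, #|T| = k.+1 -> forall x i, i \in T -> x i = zero -> tS (R k) T x = zero.
Proof.
move=> decomp T cardT x i iT xi.
have restr_T : restr T x = restr (T :\ i) x.
  apply: functional_extensionality => j; rewrite /restr in_setD1.
  by case: eqVneq => [->|] /=; rewrite ?iT ?xi.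
have cardTi : #|T :\ i| = k by move: cardT; rewrite (cardsD1 i) iT => -[].
rewrite tfrom_rseq {2}restr_T decomp // -restr_T.
by rewrite -{2}[rprod _ _]mulx0 divKmul.
Qed.

Lemma rnext_restr k :
  (forall T : {set 'I_m}, #|T| = k.+1 -> forall x i, i \in T -> x i = zero -> tS (R k) T x = zero) ->
  forall S : {set 'I_m}, #|S| = k.+1 -> forall x,
  rnext zero mul ldiv f s ord b (R k) k (restr S x) = tS (R k) S (restr S x).
Proof.
move=> absorbing S cardS x.
have other_eq0 (X : {set 'I_m}) : #|X| = k.+1 -> X != S -> tS (R k) X (restr S x) = zero.
  move=> cardX XS; have /subsetPn [i iX iS] : ~~ (X \subset S).
    by move: XS; apply: contra => XsubS; rewrite eqEcard XsubS cardS cardX leqnn.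
  by apply: (absorbing X cardX _ i iX); rewrite /restr (negbTE iS).
rewrite /rnext (lprod_map_single _ _ (i0 := tS (R k) S b)) ?s_full //.
- rewrite (lprod_map_single _ _ (i0 := S)) ?filter_uniq //.
    by rewrite mem_filter cardS !eqxx ord_full.
  by move=> X; rewrite mem_filter => /andP[/andP[/eqP cardX _] _]; exact: other_eq0.
move=> a _ a_neq; rewrite (lprod_map_single _ _ (i0 := S)) ?filter_uniq //.
  by rewrite mem_filter (eq_sym _ a) (negbTE a_neq) andbF.
by move=> X; rewrite mem_filter => /andP[/andP[/eqP cardX _] _]; exact: other_eq0.
Qed.

Lemma f_restr_rprod k (S : {set 'I_m}) : #|S| = k -> forall x, f (restr S x) = rprod k (restr S x).
Proof.
elim: k S => [|k IHk] S cardS x.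
  have -> : restr S x = fun=> zero.
    by apply: functional_extensionality => i; rewrite /restr (cards0_eq cardS) in_set0.
  by [].
rewrite rprodS rfunS (rnext_restr (tfrom_absorbing_of_decomp IHk)) //.
by rewrite tfrom_rseq restr_idem mulKdiv.
Qed.

Lemma tfrom_absorbing k (T : {set 'I_m}) : #|T| = k.+1 ->
  forall x i, i \in T -> x i = zero -> tS (R k) T x = zero.
Proof. exact: tfrom_absorbing_of_decomp (@f_restr_rprod k) T. Qed.

Lemma tfun_absorbing (S : {set 'I_m}) (x : 'I_m -> A) : (exists2 i, i \in S & x i = zero) ->
  tfun zero mul ldiv f s ord b S x = zero.
Proof.
case=> i iS xi; rewrite /tfun; case: eqVneq => // S_neq0.
have cardS : #|S| = #|S|.-1.+1 by rewrite prednK // card_gt0.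
exact: tfrom_absorbing cardS x i iS xi.
Qed.

Lemma f_rprod (x : 'I_m -> A) : f x = rprod m x.
Proof.
have restrT : restr [set: 'I_m] x = x.
  by apply: functional_extensionality => i; rewrite /restr inE.
by rewrite -restrT (f_restr_rprod (k := m)) // cardsT card_ord.
Qed.

Hypotheses (Pol_mul : Pol (fun v : 'I_2 -> A => mul (v ord0) (v ord_max)))
  (Pol_ldiv : Pol (fun v : 'I_2 -> A => ldiv (v ord0) (v ord_max))) (Pol_f : Pol f).

Lemma Pol_tfrom k (X : {set 'I_m}) : Pol (rprod k) -> Pol (tS (R k) X).
Proof.
move=> Pol_rprod.
have -> : tS (R k) X = fun x => ldiv (rprod k (restr X x)) (f (restr X x)).
  by apply: functional_extensionality => x; exact: tfrom_rseq.
exact: Pol_binop Pol_ldiv (Pol_restr zero X Pol_rprod) (Pol_restr zero X Pol_f).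
Qed.

Lemma Pol_rprod k : Pol (rprod k).
Proof.
elim: k => [|k IHk]; first exact: pol_const.
have -> : rprod k.+1 = fun x => mul (rprod k x) (r k.+1 x).
  by apply: functional_extensionality => x; exact: rprodS.
apply: Pol_binop => //; rewrite rfunS.
by do 2!apply: Pol_lprod => // ?; exact: Pol_tfrom.
Qed.

Lemma rfun_eq0 n :
  (forall k, n <= k -> forall g : ('I_k -> A) -> A,
      Pol g -> zero_absorbing zero g -> forall y, g y = zero) ->
  forall k, n <= k.+1 -> forall x, r k.+1 x = zero.
Proof.
move=> absorbing_eq0 k nk x; rewrite rfunS.
apply: lprod_map_eq0 => // a _; apply: lprod_map_eq0 => // X.
rewrite mem_filter => /andP[/andP[/eqP cardX _] _].
apply: (Pol_absorbing_on_eq0 (X := X) _ (Pol_tfrom _ (Pol_rprod k))).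
- by apply: absorbing_eq0; rewrite cardX.
- by move=> y; rewrite /tfrom restr_idem.
- exact: tfrom_absorbing.
Qed.

End Decomposition.

Theorem mainTheorem1 (A : algebra) (mt : ('I_3 -> A) -> A) (zero : A)
  (ldiv : A -> A -> A) (m : nat) (f : ('I_m -> A) -> A)
  (s : seq A) (ord : seq {set 'I_m}) (b : 'I_m -> A) :
  nilpotent A -> is_malcev mt ->
  (forall x y, lmul mt zero x (ldiv x y) = y) ->
  Pol (fun v : 'I_2 -> A => ldiv (v ord0) (v ord_max)) ->
  Pol f ->
  uniq s -> (forall a : A, a \in s) ->
  uniq ord -> (forall S, S \in ord) ->
  let mul := lmul mt zero in
  let r := rfun zero mul ldiv f s ord b in
  let t := tfun zero mul ldiv f s ord b in
  [/\ (forall (S : {set 'I_m}) (x : 'I_m -> A),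
          (exists2 i, i \in S & x i = zero) -> t S x = zero),
      (forall (S : {set 'I_m}) (x : 'I_m -> A),
          f (restr zero S x) = lprod zero mul [seq r i (restr zero S x) | i <- iota 0 #|S|.+1]),
      (forall x : 'I_m -> A, f x = lprod zero mul [seq r i x | i <- iota 0 m.+1]) &
      (forall n : nat, 0 < n ->
         (forall k, n <= k -> forall g : ('I_k -> A) -> A,
             Pol g -> zero_absorbing zero g -> forall y, g y = zero) ->
         forall k, n <= k <= m -> forall x, r k x = zero)].
Proof.
(* Nilpotency enters only through the hypotheses on [ldiv]. *)
move=> _ malcev mulKdiv Pol_ldiv Pol_f s_uniq s_full ord_uniq ord_full mul r t.
have [_ mt_yxx mt_xxy] := malcev.
have mul0x : left_id zero mul := mt_xxy zero.
have mulx0 : right_id zero mul := mt_yxx zero.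
have divKmul x : cancel (mul x) (ldiv x) := canF_sym (mulKdiv x).
have Pol_mul := Pol_lmul zero malcev.
split.
- exact: tfun_absorbing.
- move=> S x; exact: f_restr_rprod.
- exact: f_rprod.
- move=> n n_gt0 absorbing_eq0 [|k] /andP[nk _]; first by rewrite leqNgt n_gt0 in nk.
  exact: rfun_eq0 absorbing_eq0 k nk.
Qed.
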